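(* Let $\Lambda\colon L\times W\to[0,\infty]$ and $\Lambda'\colon L'\times W'\to[0,\infty]$ be Dowker dissimilarities that are $(\alpha,\alpha')$-interleaved (as Dowker dissimilarities). Then the Rips complexes $R\Lambda$ and $R\Lambda'$ are $(\alpha,\alpha')$-interleaved filtered simplicial complexes.
   Context: A Dowker dissimilarity is a function $\Lambda\colon L\times W\to[0,\infty]$ for sets $L,W$. Its Dowker nerve has level $t\in[0,\infty]$ equal to $N\Lambda_t=\{\text{finite }\sigma\subseteq L\mid \exists w\in W \text{ with }\Lambda(l,w)<t\ \forall l\in\sigma\}$. The Rips complex $R\Lambda$ is the filtered simplicial complex with $(R\Lambda)(t)=\{\text{finite }\sigma\subseteq L\mid \text{every }\tau\subseteq\sigma\text{ with }|\tau|\le2\text{ lies in }N\Lambda_t\}$. Let $\alpha,\alpha'\colon[0,\infty]\to[0,\infty]$ be order preserving with $t\le\alpha(t)$, $t\le\alpha'(t)$. An $(\alpha,\alpha')$-interleaving of Dowker dissimilarities $\Lambda,\Lambda'$ is a pair of relations $C\subseteq L\times L'$, $C'\subseteq L'\times L$ such that: (i) for every $t$ and nonempty $\sigma\in N\Lambda_t$, $C(\sigma)=\{l'\mid\exists l\in\sigma,(l,l')\in C\}$ is finite, nonempty and in $N\Lambda'_{\alpha(t)}$; (ii) symmetrically, for nonempty $\tau\in N\Lambda'_t$, $C'(\tau)$ is finite, nonempty and in $N\Lambda_{\alpha'(t)}$; (iii) $\Delta_L\subseteq C'\circ C$ and $\Delta_{L'}\subseteq C\circ C'$ (composition of relations;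 $\Delta$ the diagonal). Filtered simplicial complexes $K,K'$ are $(\alpha,\alpha')$-interleaved if there are continuous maps $F_t\colon|K(t)|\to|K'(\alpha(t))|$, $G_t\colon|K'(t)|\to|K(\alpha'(t))|$ on geometric realizations, commuting up to homotopy with the inclusions of the filtrations, such that $G_{\alpha(t)}\circ F_t$ is homotopic to the inclusion $|K(t)|\to|K(\alpha'(\alpha(t)))|$ and $F_{\alpha'(t)}\circ G_t$ is homotopic to the inclusion $|K'(t)|\to|K'(\alpha(\alpha'(t)))|$. *)

From HB Require Import structures.
From mathcomp Require Import all_boot all_order all_algebra.
From mathcomp Require Import all_classical all_reals ereal.
Set Implicit Arguments. Unset Strict Implicit. Unset Printing Implicit Defensive.
Import Order.TTheory GRing.Theory Num.Theory.
Local Open Scope classical_set_scope.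
Local Open Scope ring_scope.

Definition card_le2 {T : Type} (tau : set T) : Prop :=
  forall a b c, tau a -> tau b -> tau c -> a = b \/ a = c \/ b = c.

Definition dowker_nerve {R : realType} {L W : Type} (Lam : L -> W -> \bar R)
  (t : \bar R) : set (set L) :=
  [set sigma | finite_set sigma /\
     exists w : W, forall l, sigma l -> (Lam l w < t)%E].

Definition rips {R : realType} {L W : Type} (Lam : L -> W -> \bar R)
  (t : \bar R) : set (set L) :=
  [set sigma | finite_set sigma /\
     forall tau, tau `<=` sigma -> card_le2 tau -> dowker_nerve Lam t tau].

Definition rel_image {A B : Type} (C : A -> B -> Prop) (sigma : set A) : set B :=
  [set b | exists2 a, sigma a & C a b].

Definition admissible {R : realType} (al : \bar R -> \bar R) : Prop :=
  (forall s t : \bar R, (0 <= s)%E -> (s <= t)%E -> (al s <= al t)%E) /\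
  (forall t : \bar R, (0 <= t)%E -> (t <= al t)%E).

Definition dowker_interleaving {R : realType} {L W L' W' : Type}
  (Lam : L -> W -> \bar R) (Lam' : L' -> W' -> \bar R)
  (al al' : \bar R -> \bar R) (C : L -> L' -> Prop) (C' : L' -> L -> Prop) : Prop :=
  [/\ (forall t, (0 <= t)%E -> forall sigma, dowker_nerve Lam t sigma ->
         sigma !=set0 ->
         [/\ finite_set (rel_image C sigma), rel_image C sigma !=set0 &
             dowker_nerve Lam' (al t) (rel_image C sigma)]),
      (forall t, (0 <= t)%E -> forall tau, dowker_nerve Lam' t tau ->
         tau !=set0 ->
         [/\ finite_set (rel_image C' tau), rel_image C' tau !=set0 &
             dowker_nerve Lam (al' t) (rel_image C' tau)]),
      (forall l : L, exists l' : L', C l l' /\ C' l' l) &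
      (forall l' : L', exists l : L, C' l' l /\ C l l')].

Definition dowker_interleaved {R : realType} {L W L' W' : Type}
  (Lam : L -> W -> \bar R) (Lam' : L' -> W' -> \bar R)
  (al al' : \bar R -> \bar R) : Prop :=
  exists C C', dowker_interleaving Lam Lam' al al' C C'.

(* A point of the geometric realization of a simplicial complex on vertex set
   L is a function x : L -> R (barycentric coordinates).  The closed simplex
   |sigma| of a finite sigma carries the Euclidean topology; |K| carries the
   weak (coherent) topology w.r.t. its closed simplices. *)

Definition simplex_pt {R : realType} {L : choiceType} (sigma : set L)
  (x : L -> R) : Prop :=
  [/\ forall l, 0 <= x l, forall l, ~ sigma l -> x l = 0 &
      (\sum_(l \in sigma) x l = 1)%R].

Definition real_pt {R : realType} {L : choiceType} (K : set (set L))
  (x : L -> R) : Prop := exists2 sigma, K sigma & simplex_pt sigma x.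

Definition simplex_open {R : realType} {L : choiceType} (sigma : set L)
  (U : set (L -> R)) : Prop :=
  forall x, simplex_pt sigma x -> U x ->
    exists2 e : R, 0 < e & forall y, simplex_pt sigma y ->
      (forall l, sigma l -> `|x l - y l| < e) -> U y.

Definition real_open {R : realType} {L : choiceType} (K : set (set L))
  (U : set (L -> R)) : Prop :=
  forall sigma, K sigma -> simplex_open sigma U.

Definition real_cont {R : realType} {L L' : choiceType}
  (K : set (set L)) (K' : set (set L')) (f : (L -> R) -> (L' -> R)) : Prop :=
  (forall x, real_pt K x -> real_pt K' (f x)) /\
  (forall V, real_open K' V -> real_open K (f @^-1` V)).

(* f and g : |K| -> |K'| are homotopic: there is H : [0,1] x |K| -> |K'|
   continuous for the product topology with H 0 = f and H 1 = g. *)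
Definition real_homotopic {R : realType} {L L' : choiceType}
  (K : set (set L)) (K' : set (set L')) (f g : (L -> R) -> (L' -> R)) : Prop :=
  exists H : R -> (L -> R) -> (L' -> R),
  [/\ forall x, real_pt K x -> H 0 x = f x,
      forall x, real_pt K x -> H 1 x = g x,
      forall s x, 0 <= s <= 1 -> real_pt K x -> real_pt K' (H s x) &
      forall V, real_open K' V ->
        forall s x, 0 <= s <= 1 -> real_pt K x -> V (H s x) ->
          exists e : R, exists U : set (L -> R),
            [/\ 0 < e, real_open K U, U x &
                forall s' x', 0 <= s' <= 1 -> `|s - s'| < e ->
                  real_pt K x' -> U x' -> V (H s' x')]].

(* (alpha, alpha')-interleaving of filtered simplicial complexes indexed by
   t in [0,oo]; the inclusions of geometric realizations are the identity on
   barycentric coordinates. *)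
Definition filtered_interleaved {R : realType} {L L' : choiceType}
  (K : \bar R -> set (set L)) (K' : \bar R -> set (set L'))
  (al al' : \bar R -> \bar R) : Prop :=
  exists (F : \bar R -> (L -> R) -> (L' -> R))
         (G : \bar R -> (L' -> R) -> (L -> R)),
  [/\ forall t, (0 <= t)%E -> real_cont (K t) (K' (al t)) (F t),
      forall t, (0 <= t)%E -> real_cont (K' t) (K (al' t)) (G t),
      (forall s t, (0 <= s)%E -> (s <= t)%E ->
        real_homotopic (K s) (K' (al t)) (F t) (F s)) /\
      (forall s t, (0 <= s)%E -> (s <= t)%E ->
        real_homotopic (K' s) (K (al' t)) (G t) (G s)),
      forall t, (0 <= t)%E ->
        real_homotopic (K t) (K (al' (al t))) (G (al t) \o F t) id &
      forall t, (0 <= t)%E ->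
        real_homotopic (K' t) (K' (al (al' t))) (F (al' t) \o G t) id].

(* Condition (iii) of the interleaving yields vertex maps phi : L -> L' and
   psi : L' -> L with C l (phi l), C' (phi l) l and C' l' (psi l').  Membership
   in a Rips complex is decided on pairs of vertices, and conditions (i), (ii)
   apply to pairs, so phi maps every simplex of R Lam (t) into a simplex of
   R Lam' (alpha t).  Its affine extension is the same map F_t for every t,
   hence the homotopies between the F_t are constant.  For G o F, every vertex
   of sigma \/ psi (phi sigma) lies in C' (C {c}) for a vertex c of sigma, so
   this set is a simplex of R Lam (alpha' (alpha t)) containing sigma and
   psi (phi sigma): the straight-line homotopy from psi o phi to the identity
   stays in the complex.  All maps involved are Lipschitz on each closed
   simplex, which gives continuity for the weak topologies; for the homotopy
   parameter one adds the tube lemma over [0, 1]. *)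

From mathcomp Require Import all_boot all_order all_algebra finmap.
From mathcomp Require Import all_classical all_reals ereal topology normedtype.
From mathcomp Require Import ring lra.
Set Implicit Arguments. Unset Strict Implicit. Unset Printing Implicit Defensive.
Import Order.TTheory GRing.Theory Num.Theory.
Import numFieldNormedType.Exports.
Local Open Scope classical_set_scope.
Local Open Scope ring_scope.

Section Realization.
Variable R : realType.

Lemma simplex_pt_neq0 (L : choiceType) (σ : set L) (x : L -> R) :
  simplex_pt σ x -> σ !=set0.
Proof.
case=> _ _ x1; apply/set0P/negP => /eqP σ0.
by move: x1; rewrite σ0 fsbig_set0 => /eqP; rewrite eq_sym oner_eq0.
Qed.

Lemma simplex_pt_le1 (L : choiceType) (σ : set L) (x : L -> R) :
  finite_set σ -> simplex_pt σ x -> forall l, x l <= 1.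
Proof.
move=> fσ [x0 xz x1] l; have [σl|/xz->//] := pselect (σ l).
rewrite -x1 fsbig_finite // (bigD1_seq l) //=; last first.
  by rewrite in_fset_set // inE.
by rewrite lerDl sumr_ge0.
Qed.

Lemma simplex_pt_dist_le1 (L : choiceType) (σ : set L) (x y : L -> R) :
  finite_set σ -> simplex_pt σ x -> simplex_pt σ y ->
  forall l, `|x l - y l| <= 1.
Proof.
move=> fσ px py l.
have := simplex_pt_le1 fσ px l; have := simplex_pt_le1 fσ py l.
case: px py => [x0 _ _] [y0 _ _]; have := x0 l; have := y0 l.
by move=> *; rewrite ler_norml; apply/andP; split; lra.
Qed.

Lemma simplex_pt_sub (L : choiceType) (σ τ : set L) (x : L -> R) :
  σ `<=` τ -> simplex_pt σ x -> simplex_pt τ x.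
Proof.
move=> στ [x0 xz x1]; split => // [l τl|]; first by apply: xz => /στ.
by rewrite -x1; apply/esym/fsbig_widen => // l [_ /xz].
Qed.

Lemma simplex_pt_segment (L : choiceType) (σ : set L) (x y : L -> R) (s : R) :
  finite_set σ -> simplex_pt σ x -> simplex_pt σ y -> 0 <= s <= 1 ->
  simplex_pt σ (fun l => x l + s * (y l - x l)).
Proof.
move=> fσ [x0 xz x1] [y0 yz y1] /andP[s0 s1]; split.
- by move=> l; have := x0 l; have := y0 l; nra.
- by move=> l σl; rewrite xz // yz // subrr mulr0 addr0.
- rewrite fsbig_finite // big_split /= -mulr_sumr sumrB -!fsbig_finite //.
  by rewrite x1 y1 subrr mulr0 addr0.
Qed.

(* A finitely supported sum: it is meaningful on points of realizations,
   whose barycentric coordinates vanish outside a finite simplex. *)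
Definition simplicial_ext (L L' : choiceType) (phi : L -> L') (x : L -> R) :
    L' -> R :=
  fun l' => \sum_(l \in [set: L]) (if l' == phi l then x l else 0).

Lemma simplicial_extE (L L' : choiceType) (phi : L -> L') (σ : set L)
    (x : L -> R) :
  finite_set σ -> simplex_pt σ x -> forall l',
  simplicial_ext phi x l' =
    \sum_(l <- fset_set σ) (if l' == phi l then x l else 0).
Proof.
move=> fσ [_ xz _] l'; rewrite /simplicial_ext (fsbigTE (fset_set σ)) // => l.
by rewrite in_fset_set // => /negP σl; rewrite xz ?if_same // => /mem_set.
Qed.

Lemma simplex_pt_simplicial_ext (L L' : choiceType) (phi : L -> L') (σ : set L)
    (x : L -> R) :
  finite_set σ -> simplex_pt σ x ->
  simplex_pt (phi @` σ) (simplicial_ext phi x).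
Proof.
move=> fσ px; have [x0 _ x1] := px; have fφσ := finite_image phi fσ.
split=> [l'|l' nφl'|]; rewrite ?(simplicial_extE phi fσ px).
- by apply: sumr_ge0 => l _; case: ifP.
- apply: big1_seq => l /andP[_]; rewrite in_fset_set // inE => σl.
  by case: ifP => // /eqP l'E; case: nφl'; exists l.
- under eq_fsbigr do rewrite (simplicial_extE phi fσ px).
  rewrite fsbig_finite //= exchange_big -x1 fsbig_finite //=.
  apply: eq_big_seq => l; rewrite in_fset_set // inE => σl.
  rewrite -big_mkcond /= -big_filter (@filter_pred1_uniq _ _ (phi l)).
  + by rewrite big_seq1.
  + by [].
  + by rewrite in_fset_set // inE; exists l.
Qed.

Lemma simplicial_ext_dist (L L' : choiceType) (phi : L -> L') (σ : set L)
    (x y : L -> R) (d : R) :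
  finite_set σ -> simplex_pt σ x -> simplex_pt σ y -> 0 <= d ->
  (forall l, σ l -> `|x l - y l| <= d) -> forall l',
  `|simplicial_ext phi x l' - simplicial_ext phi y l'| <= d *+ size (fset_set σ).
Proof.
move=> fσ px py d0 xy l'.
rewrite (simplicial_extE phi fσ px) (simplicial_extE phi fσ py) -sumrB.
apply: le_trans (ler_norm_sum _ _ _) _.
have -> : d *+ size (fset_set σ) = \sum_(l <- fset_set σ) d.
  by rewrite big_const_seq count_predT; elim: size => //= n <-; rewrite mulrS.
rewrite big_seq_cond [X in _ <= X]big_seq_cond; apply: ler_sum => l.
rewrite andbT in_fset_set // inE => σl.
by case: ifP => _; rewrite ?subr0 ?normr0 ?xy.
Qed.

Definition simplexwise_lipschitz (L L' : choiceType) (K : set (set L))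
    (f : (L -> R) -> (L' -> R)) :=
  forall σ, K σ -> exists2 M : R, 0 < M & forall d x y, 0 <= d ->
    simplex_pt σ x -> simplex_pt σ y -> (forall l, σ l -> `|x l - y l| <= d) ->
    forall l', `|f x l' - f y l'| <= M * d.

Definition simplexwise (L L' : choiceType) (K : set (set L)) (K' : set (set L'))
    (f : (L -> R) -> (L' -> R)) :=
  forall σ, K σ -> σ !=set0 ->
    exists2 τ, K' τ & forall x, simplex_pt σ x -> simplex_pt τ (f x).

Definition contiguous (L L' : choiceType) (K : set (set L)) (K' : set (set L'))
    (f g : (L -> R) -> (L' -> R)) :=
  forall σ, K σ -> σ !=set0 -> exists2 τ, K' τ &
    forall x, simplex_pt σ x -> simplex_pt τ (f x) /\ simplex_pt τ (g x).

Lemma simplexwise_lipschitz_simplicial_ext (L L' : choiceType) (K : set (set L))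
    (phi : L -> L') :
  (forall σ, K σ -> finite_set σ) ->
  simplexwise_lipschitz K (simplicial_ext phi).
Proof.
move=> fK σ Kσ; exists (size (fset_set σ)).+1%:R => // d x y d0 px py xy l'.
apply: le_trans (simplicial_ext_dist phi (fK σ Kσ) px py d0 xy l') _.
by rewrite mulr_natl mulrS lerDr.
Qed.

Lemma simplexwise_lipschitz_id (L : choiceType) (K : set (set L)) :
  simplexwise_lipschitz K id.
Proof.
move=> σ _; exists 1 => // d x y d0 [_ xz _] [_ yz _] xy l; rewrite mul1r.
have [σl|σl] := pselect (σ l); first exact: xy.
by rewrite /= xz // yz // subrr normr0.
Qed.

Lemma simplexwise_lipschitz_comp (L L' L2 : choiceType) (K : set (set L))
    (K' : set (set L')) (f : (L -> R) -> (L' -> R)) (g : (L' -> R) -> (L2 -> R)) :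
  simplexwise K K' f -> simplexwise_lipschitz K f -> simplexwise_lipschitz K' g ->
  simplexwise_lipschitz K (g \o f).
Proof.
move=> sf lf lg σ Kσ; have [σ0|σ0] := pselect (σ !=set0); last first.
  by exists 1 => // d x y _ /simplex_pt_neq0.
have [τ Kτ fτ] := sf σ Kσ σ0.
have [Mf Mf0 HMf] := lf σ Kσ; have [Mg Mg0 HMg] := lg τ Kτ.
exists (Mg * Mf) => [|d x y d0 px py xy l'']; first exact: mulr_gt0.
rewrite -mulrA; apply: HMg; [exact: mulr_ge0 (ltW Mf0) d0|exact: fτ|exact: fτ|].
by move=> l' _; apply: HMf.
Qed.

Lemma real_cont_simplexwise (L L' : choiceType) (K : set (set L))
    (K' : set (set L')) (f : (L -> R) -> (L' -> R)) :
  simplexwise K K' f -> simplexwise_lipschitz K f -> real_cont K K' f.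
Proof.
move=> sf lf; split=> [x [σ Kσ px]|V oV σ Kσ x px Vfx].
  have [τ Kτ fτ] := sf σ Kσ (simplex_pt_neq0 px).
  by exists τ => //; apply: fτ.
have [τ Kτ fτ] := sf σ Kσ (simplex_pt_neq0 px); have [M M0 HM] := lf σ Kσ.
have [e e0 He] := oV τ Kτ (f x) (fτ x px) Vfx.
have δ0 : 0 < e / (2 * M) by rewrite divr_gt0 ?mulr_gt0.
exists (e / (2 * M)) => // y py xy; apply: He (fτ y py) _ => l' _.
apply: le_lt_trans (HM _ x y (ltW δ0) px py (fun l σl => ltW (xy l σl)) l') _.
have -> : M * (e / (2 * M)) = e / 2 by field; rewrite gt_eqF.
by rewrite ltr_pdivrMr // ltr_pMr // ltr1n.
Qed.

Lemma real_homotopic_refl (L L' : choiceType) (K : set (set L))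
    (K' : set (set L')) (f : (L -> R) -> (L' -> R)) :
  real_cont K K' f -> real_homotopic K K' f f.
Proof.
case=> fK oK; exists (fun=> f); split=> // [s x _ /fK //|V oV s x _ Kx Vfx].
by exists 1, (f @^-1` V); split=> // *; apply: oK.
Qed.

Lemma segment_tube (T : Type) (F : set_system T) (P : R -> T -> Prop) :
  Filter F ->
  (forall s, 0 <= s <= 1 -> exists2 e : R, 0 < e &
     F [set y | forall s', `|s - s'| < e -> P s' y]) ->
  F [set y | forall s, 0 <= s <= 1 -> P s y].
Proof.
move=> FF nearP.
have cover := (compact_near_coveringP _).1 (@segment_compact R 0 1) T F
  (fun y s => P s y) FF.
have : \forall y \near F, `[(0 : R), 1]%classic `<=` P ^~ y.
  apply: cover => s; rewrite /= in_itv /= => /nearP [e e0 Fe].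
  exists (ball s e, [set y | forall s', `|s - s'| < e -> P s' y]) => /=.
    by split=> //; exact: nbhsx_ballx.
  by case=> s' y [/= se' Py]; apply: Py; move: se'; rewrite /ball.
by apply: filterS => y Py s s01; apply: Py; rewrite /= in_itv.
Qed.

Definition simplex_nbhs (L : choiceType) (ρ : set L) (x : L -> R) :
    set_system (L -> R) :=
  filter_from [set d : R | 0 < d]
    (fun d => [set y | simplex_pt ρ y -> forall l, ρ l -> `|x l - y l| < d]).

Lemma simplex_nbhs_filter (L : choiceType) (ρ : set L) (x : L -> R) :
  Filter (simplex_nbhs ρ x).
Proof.
apply: filter_from_filter; first by exists 1; rewrite /= ltr01.
move=> d d' d0 d'0; exists (Num.min d d'); first by rewrite /= lt_min d0 d'0.
by move=> y xy; split=> py l ρl; have := xy py l ρl; rewrite lt_min => /andP[].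
Qed.

Definition line_homotopy (L L' : choiceType) (f g : (L -> R) -> (L' -> R))
    (s : R) (x : L -> R) : L' -> R :=
  fun l' => f x l' + s * (g x l' - f x l').

Lemma dist_line_point (a b a' b' s s' : R) : 0 <= s' <= 1 ->
  `|(a + s * (b - a)) - (a' + s' * (b' - a'))| <=
    2 * `|a - a'| + `|b - b'| + `|s - s'| * `|b - a|.
Proof.
move=> /andP[s'0 s'1].
have -> : a + s * (b - a) - (a' + s' * (b' - a')) =
    (a - a') + s' * ((b - b') - (a - a')) + (s - s') * (b - a) by ring.
have hs' : `|s' * ((b - b') - (a - a'))| <= `|b - b'| + `|a - a'|.
  rewrite normrM; apply: le_trans (ler_normB _ _).
  by rewrite ler_piMl // ger0_norm.
have := ler_normD (a - a' + s' * (b - b' - (a - a'))) ((s - s') * (b - a)).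
have := ler_normD (a - a') (s' * (b - b' - (a - a'))).
rewrite (normrM (s - s')); lra.
Qed.

Section LineHomotopy.
Variables (L L' : choiceType) (K : set (set L)) (K' : set (set L')).
Variables (f g : (L -> R) -> (L' -> R)).
Hypothesis finK' : forall τ, K' τ -> finite_set τ.
Hypothesis lip_f : simplexwise_lipschitz K f.
Hypothesis lip_g : simplexwise_lipschitz K g.
Hypothesis fg : contiguous K K' f g.

Lemma line_homotopy_simplexwise σ : K σ -> σ !=set0 -> exists2 τ, K' τ &
  forall s x, 0 <= s <= 1 -> simplex_pt σ x ->
    simplex_pt τ (line_homotopy f g s x).
Proof.
move=> Kσ σ0; have [τ Kτ fgτ] := fg Kσ σ0; exists τ => // s x s01 px.
by have [fx gx] := fgτ x px; exact: simplex_pt_segment (finK' Kτ) fx gx s01.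
Qed.

Lemma line_homotopy_near V ρ x s :
  real_open K' V -> K ρ -> simplex_pt ρ x -> 0 <= s <= 1 ->
  V (line_homotopy f g s x) ->
  exists2 η : R, 0 < η & forall s' y, 0 <= s' <= 1 -> `|s - s'| < η ->
    simplex_pt ρ y -> (forall l, ρ l -> `|x l - y l| < η) ->
    V (line_homotopy f g s' y).
Proof.
move=> oV Kρ px s01 Vx; have ρ0 := simplex_pt_neq0 px.
have [τ Kτ Hτ] := line_homotopy_simplexwise Kρ ρ0.
have [τ' Kτ' fgτ'] := fg Kρ ρ0; have [fx gx] := fgτ' x px.
have [Mf Mf0 HMf] := lip_f Kρ; have [Mg Mg0 HMg] := lip_g Kρ.
have [r r0 Hr] := oV τ Kτ _ (Hτ s x s01 px) Vx.
pose η := r / (2 * (2 * Mf + Mg + 1)).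
have η0 : 0 < η by rewrite divr_gt0 ?mulr_gt0 //; lra.
have ηE : 2 * (Mf * η) + Mg * η + η = r / 2 by rewrite /η; field; lra.
exists η => // s' y s'01 ss' py xy; apply: Hr (Hτ s' y s'01 py) _ => l' _.
have xy' l : ρ l -> `|x l - y l| <= η by move=> /xy /ltW.
apply: le_lt_trans (dist_line_point _ _ _ _ _ s'01) _.
have := HMf _ x y (ltW η0) px py xy' l'.
have := HMg _ x y (ltW η0) px py xy' l'.
have : `|s - s'| * `|g x l' - f x l'| <= η.
  rewrite -[η]mulr1 ler_pM ?(ltW ss') //.
  exact: simplex_pt_dist_le1 (finK' Kτ') gx fx l'.
have : r / 2 < r by rewrite ltr_pdivrMr // ltr_pMr // ltr1n.
lra.
Qed.

Lemma real_open_line_homotopy_sweep V (s e : R) : real_open K' V ->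
  real_open K [set x | forall s', 0 <= s' <= 1 -> `|s - s'| <= e ->
                                  V (line_homotopy f g s' x)].
Proof.
move=> oV ρ Kρ x px Ux.
pose P s' y := 0 <= s' <= 1 -> simplex_pt ρ y -> `|s - s'| <= e ->
  V (line_homotopy f g s' y).
(* Compactness of [0, 1] makes the radius uniform in s'. *)
have [d d0 Hd] : simplex_nbhs ρ x [set y | forall s', 0 <= s' <= 1 -> P s' y].
  apply: segment_tube (simplex_nbhs_filter ρ x) _ => s' s'01.
  have [ss'|ss'] := leP `|s - s'| e.
    have [η η0 Hη] := line_homotopy_near oV Kρ px s'01 (Ux s' s'01 ss').
    exists η => //; exists η => // y xy s'' s's'' s''01 py _.
    exact: Hη s''01 s's'' py (xy py).
  exists (`|s - s'| - e); first by rewrite subr_gt0.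
  exists 1 => [|y _ s'' s's'' _ _ ss'']; first exact: ltr01.
  have := ler_distD s'' s s'; rewrite (distrC s'' s'); lra.
by exists d => // y py xy s' s'01; exact: (Hd y (fun=> xy) s' s'01 s'01 py).
Qed.

Lemma real_homotopic_contiguous : real_homotopic K K' f g.
Proof.
exists (line_homotopy f g); split.
- by move=> x _; apply/funext => l'; rewrite /line_homotopy mul0r addr0.
- by move=> x _; apply/funext => l'; rewrite /line_homotopy mul1r addrC subrK.
- move=> s x s01 [σ Kσ px].
  have [τ Kτ Hτ] := line_homotopy_simplexwise Kσ (simplex_pt_neq0 px).
  by exists τ => //; exact: Hτ.
move=> V oV s x s01 [σ Kσ px] Vx.
have [η η0 Hη] := line_homotopy_near oV Kσ px s01 Vx.
have η2 : η / 2 < η by rewrite ltr_pdivrMr // ltr_pMr // ltr1n.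
exists (η / 2), [set x' | forall s', 0 <= s' <= 1 -> `|s - s'| <= η / 2 ->
                                     V (line_homotopy f g s' x')].
split=> [||s' s'01 ss'|s' x' s'01 ss' _ Ux'].
- by rewrite divr_gt0.
- exact: real_open_line_homotopy_sweep.
- by apply: Hη => // [|l _]; [exact: le_lt_trans ss' η2|rewrite subrr normr0].
- exact: Ux' (ltW ss').
Qed.

End LineHomotopy.

End Realization.

Section RipsComplex.
Variable R : realType.

Definition maps_nerve (L L' W W' : Type) (C : L -> L' -> Prop)
    (Lam : L -> W -> \bar R) (t : \bar R)
    (Lam' : L' -> W' -> \bar R) (u : \bar R) :=
  forall σ, dowker_nerve Lam t σ -> σ !=set0 ->
    [/\ finite_set (rel_image C σ), rel_image C σ !=set0 &
        dowker_nerve Lam' u (rel_image C σ)].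

Definition rel_comp (A B D : Type) (C : A -> B -> Prop) (C' : B -> D -> Prop) :
    A -> D -> Prop :=
  fun a d => exists2 b, C a b & C' b d.

Lemma rel_image_comp (A B D : Type) (C : A -> B -> Prop) (C' : B -> D -> Prop)
    (σ : set A) :
  rel_image (rel_comp C C') σ = rel_image C' (rel_image C σ).
Proof.
apply/seteqP; split=> d.
  by case=> a σa [b Cab C'bd]; exists b => //; exists a.
by case=> b [a σa Cab] C'bd; exists a => //; exists b.
Qed.

Lemma dowker_nerve_le (L W : Type) (Lam : L -> W -> \bar R) (t u : \bar R)
    (σ : set L) :
  (t <= u)%E -> dowker_nerve Lam t σ -> dowker_nerve Lam u σ.
Proof.
move=> tu [fσ [w hw]]; split=> //; exists w => l σl.
exact: lt_le_trans (hw l σl) tu.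
Qed.

Lemma dowker_nerve_sub (L W : Type) (Lam : L -> W -> \bar R) (t : \bar R)
    (σ τ : set L) :
  finite_set τ -> τ `<=` σ -> dowker_nerve Lam t σ -> dowker_nerve Lam t τ.
Proof. by move=> fτ τσ [_ [w hw]]; split=> //; exists w => l /τσ /hw. Qed.

Lemma maps_nerve_le (L L' W W' : Type) (C : L -> L' -> Prop)
    (Lam : L -> W -> \bar R) (Lam' : L' -> W' -> \bar R) (t u u' : \bar R) :
  (u <= u')%E -> maps_nerve C Lam t Lam' u -> maps_nerve C Lam t Lam' u'.
Proof.
move=> uu' hC σ nσ σ0; have [fσ' σ'0 nσ'] := hC σ nσ σ0.
by split=> //; exact: dowker_nerve_le uu' nσ'.
Qed.

Lemma maps_nerve_comp (L L' L2 W W' W2 : Type) (C : L -> L' -> Prop)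
    (C' : L' -> L2 -> Prop) (Lam : L -> W -> \bar R) (Lam' : L' -> W' -> \bar R)
    (Lam2 : L2 -> W2 -> \bar R) (t u v : \bar R) :
  maps_nerve C Lam t Lam' u -> maps_nerve C' Lam' u Lam2 v ->
  maps_nerve (rel_comp C C') Lam t Lam2 v.
Proof.
move=> hC hC' σ nσ σ0; rewrite rel_image_comp.
by have [_ σ'0 nσ'] := hC σ nσ σ0; exact: hC'.
Qed.

Lemma card_le2_pair (T : Type) (a b : T) : card_le2 [set a; b].
Proof.
move=> x y z /= [->|->] [->|->] [->|->];
  first [by left | by right; left | by right; right].
Qed.

Lemma card_le2_sub_rel_image (A B : Type) (C : A -> B -> Prop) (σ : set A)
    (τ : set B) :
  σ !=set0 -> τ `<=` rel_image C σ -> card_le2 τ ->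
  exists a b, [/\ σ a, σ b & τ `<=` rel_image C [set a; b]].
Proof.
move=> [a0 σa0] τσ c2; have [[u τu]|τ0] := pselect (τ !=set0); last first.
  by exists a0, a0; split=> // z τz; case: τ0; exists z.
have [a σa Cau] := τσ u τu.
have [[v [τv vu]]|nv] := pselect (exists v, τ v /\ v <> u); last first.
  exists a, a; split=> // z τz; exists a; first by left.
  by have -> : z = u by apply: contrapT => zu; apply: nv; exists z.
have [b σb Cbv] := τσ v τv; exists a, b; split=> // z τz.
have [vuE|[uz|vz]] := c2 u v z τu τv τz; first by case: vu.
- by exists a; [left | rewrite -uz].
- by exists b; [right | rewrite -vz].
Qed.

Lemma rips_sub_rel_image (L L' W W' : Type) (C : L -> L' -> Prop)
    (Lam : L -> W -> \bar R) (Lam' : L' -> W' -> \bar R) (t u : \bar R)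
    (σ : set L) (X : set L') :
  maps_nerve C Lam t Lam' u -> rips Lam t σ -> σ !=set0 ->
  finite_set X -> X `<=` rel_image C σ -> rips Lam' u X.
Proof.
move=> hC [_ rσ] σ0 fX Xσ; split=> // τ τX c2.
have [a [b [σa σb τab]]] :=
  card_le2_sub_rel_image σ0 (subset_trans τX Xσ) c2.
have nab : dowker_nerve Lam t [set a; b].
  by apply: rσ; [move=> l /= [->|->] | exact: card_le2_pair].
have [fab _ nCab] := hC _ nab (ex_intro _ a (or_introl erefl)).
exact: dowker_nerve_sub (sub_finite_set τab fab) τab nCab.
Qed.

Lemma rips_finite (L W : Type) (Lam : L -> W -> \bar R) (t : \bar R)
    (σ : set L) :
  rips Lam t σ -> finite_set σ.
Proof. by case. Qed.

Section RipsRealization.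
Variables (L L' : choiceType) (W W' : Type).
Variables (Lam : L -> W -> \bar R) (Lam' : L' -> W' -> \bar R).

Lemma simplexwise_rips_simplicial_ext (C : L -> L' -> Prop) (phi : L -> L')
    (t u : \bar R) :
  maps_nerve C Lam t Lam' u -> (forall l, C l (phi l)) ->
  simplexwise (rips Lam t) (rips Lam' u) (simplicial_ext (R := R) phi).
Proof.
move=> hC Cphi σ rσ σ0; have fσ := rips_finite rσ.
exists (phi @` σ) => [|x]; last exact: simplex_pt_simplicial_ext.
apply: rips_sub_rel_image hC rσ σ0 (finite_image _ fσ) _.
by move=> _ [l σl <-]; exists l.
Qed.

Lemma real_cont_rips_simplicial_ext (C : L -> L' -> Prop) (phi : L -> L')
    (t u : \bar R) :
  maps_nerve C Lam t Lam' u -> (forall l, C l (phi l)) ->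
  real_cont (rips Lam t) (rips Lam' u) (simplicial_ext (R := R) phi).
Proof.
move=> hC Cphi; apply: real_cont_simplexwise.
  exact: simplexwise_rips_simplicial_ext hC Cphi.
by apply: simplexwise_lipschitz_simplicial_ext => σ; exact: rips_finite.
Qed.

Lemma real_homotopic_rips_simplicial_ext_comp (C : L -> L' -> Prop)
    (C' : L' -> L -> Prop) (phi : L -> L') (psi : L' -> L) (t u v : \bar R) :
  maps_nerve C Lam t Lam' u -> maps_nerve C' Lam' u Lam v ->
  (forall l, C l (phi l) /\ C' (phi l) l) -> (forall l', C' l' (psi l')) ->
  real_homotopic (rips Lam t) (rips Lam v)
    (simplicial_ext psi \o simplicial_ext (R := R) phi) id.
Proof.
move=> hC hC' CC' C'psi; apply: real_homotopic_contiguous.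
- by move=> σ; exact: rips_finite.
- apply: simplexwise_lipschitz_comp.
  + exact: simplexwise_rips_simplicial_ext hC (fun l => (CC' l).1).
  + by apply: simplexwise_lipschitz_simplicial_ext => σ; exact: rips_finite.
  + by apply: simplexwise_lipschitz_simplicial_ext => σ; exact: rips_finite.
- exact: simplexwise_lipschitz_id.
move=> σ rσ σ0; have fσ := rips_finite rσ.
exists (σ `|` psi @` (phi @` σ)) => [|x px]; last split.
- apply: rips_sub_rel_image (maps_nerve_comp hC hC') rσ σ0 _ _.
    by rewrite finite_setU; split=> //; do 2 apply: finite_image.
  move=> z [σz|[_ [l σl <-] <-]].
    by exists z => //; exists (phi z); case: (CC' z).
  by exists l => //; exists (phi l); [exact: (CC' l).1 | exact: C'psi].
- apply: simplex_pt_sub (fun _ => @or_intror _ _) _.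
  apply: (simplex_pt_simplicial_ext _ (finite_image _ fσ)).
  exact: simplex_pt_simplicial_ext.
- exact: simplex_pt_sub (fun _ => @or_introl _ _) px.
Qed.

End RipsRealization.

End RipsComplex.

Theorem corollary7p15 (R : realType) (L L' : choiceType) (W W' : Type)
  (Lam : L -> W -> \bar R) (Lam' : L' -> W' -> \bar R)
  (al al' : \bar R -> \bar R) :
  (forall l w, (0 <= Lam l w)%E) ->
  (forall l w, (0 <= Lam' l w)%E) ->
  admissible al -> admissible al' ->
  dowker_interleaved Lam Lam' al al' ->
  filtered_interleaved (rips Lam) (rips Lam') al al'.
Proof.
move=> _ _ [al_mono al_ge] [al'_mono al'_ge] [C [C' [hC hC' CC' C'C]]].
have [phi Hphi] := choice CC'; have [psi Hpsi] := choice C'C.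
have Cphi l := (Hphi l).1; have C'psi l' := (Hpsi l').1.
exists (fun=> simplicial_ext phi), (fun=> simplicial_ext psi); split.
- by move=> t t0; exact: real_cont_rips_simplicial_ext (hC t t0) Cphi.
- by move=> t t0; exact: real_cont_rips_simplicial_ext (hC' t t0) C'psi.
- split=> s t s0 st; apply/real_homotopic_refl/real_cont_rips_simplicial_ext.
  + exact: maps_nerve_le (al_mono s t s0 st) (hC s s0).
  + exact: Cphi.
  + exact: maps_nerve_le (al'_mono s t s0 st) (hC' s s0).
  + exact: C'psi.
- move=> t t0; have alt0 := le_trans t0 (al_ge t t0).
  exact: real_homotopic_rips_simplicial_ext_comp
    (hC t t0) (hC' _ alt0) Hphi C'psi.
- move=> t t0; have al't0 := le_trans t0 (al'_ge t t0).
  exact: real_homotopic_rips_simplicial_ext_comp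
    (hC' t t0) (hC _ al't0) Hpsi Cphi.
Qed.
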